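(* Let $n,k$ be positive integers, $m=kn+1$, and let $\Delta$ be a $\Gamma_{m,n}$-semimodule. Suppose $x\in\Delta$ and $x-\alpha n-1\notin\Delta$ for some $\alpha\in\{0,1,\dots,k\}$. Then $x$ is an $m$-generator of $\Delta$.
   Context: $\Gamma_{m,n}=\{am+bn:a,b\in\mathbb{Z}_{\ge0}\}$ for coprime positive $m,n$. A $\Gamma_{m,n}$-semimodule is a subset $\Delta\subset\mathbb{Z}_{\ge0}$ with $\Delta+\Gamma_{m,n}\subset\Delta$. An $m$-generator of $\Delta$ is an element $a\in\Delta$ with $a-m\notin\Delta$. *)

From mathcomp Require Import all_boot.
Set Implicit Arguments. Unset Strict Implicit. Unset Printing Implicit Defensive.

Definition in_Gamma (m n g : nat) : Prop := exists a b : nat, g = a * m + b * n.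

Definition is_semimodule (m n : nat) (Delta : nat -> Prop) : Prop :=
  forall d g, Delta d -> in_Gamma m n g -> Delta (d + g).

(* "x - a \in Delta" for the integer x - a (false when x - a < 0,
   since Delta is a subset of Z_{>=0}). *)
Definition in_diff (Delta : nat -> Prop) (x a : nat) : Prop :=
  a <= x /\ Delta (x - a).

Definition is_m_generator (m : nat) (Delta : nat -> Prop) (x : nat) : Prop :=
  Delta x /\ ~ in_diff Delta x m.

From mathcomp Require Import all_boot.
From mathcomp Require Import zify.

(* If x - m lay in Delta, adding (k - alpha) n to it would put
   x - (alpha n + 1) = (x - m) + (k - alpha) n in Delta as well. *)

Lemma in_Gamma_muln (m n b : nat) : in_Gamma m n (b * n).
Proof. by exists 0, b. Qed.

Lemma semimodule_addMn (m n : nat) (Delta : nat -> Prop) (d b : nat) :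
  is_semimodule m n Delta -> Delta d -> Delta (d + b * n).
Proof. by move=> hS hd; apply: hS hd (in_Gamma_muln m n b). Qed.

Lemma in_diff_subMn (n k : nat) (Delta : nat -> Prop) (x alpha : nat) :
  is_semimodule (k * n + 1) n Delta -> alpha <= k ->
  in_diff Delta x (k * n + 1) -> in_diff Delta x (alpha * n + 1).
Proof.
move=> hS ha [hle hD]; split; first nia.
have -> : x - (alpha * n + 1) = x - (k * n + 1) + (k - alpha) * n by nia.
exact: semimodule_addMn hS hD.
Qed.

Theorem mainTheorem15 (n k : nat) (Delta : nat -> Prop) (x alpha : nat) :
  0 < n -> 0 < k ->
  is_semimodule (k * n + 1) n Delta ->
  Delta x ->
  alpha <= k ->
  ~ in_diff Delta x (alpha * n + 1) ->
  is_m_generator (k * n + 1) Delta x.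
Proof.
move=> _ _ hS hx ha hnd; split=> // hm.
apply: hnd; apply: in_diff_subMn hS ha hm.
Qed.
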